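(* Let $f(x,y)=x^2y$. Let $t>0$ and let $I=[a,a+3t]$ and $J=[b,b+3t]$ be intervals contained in $[\tfrac23,1]$. Then \[ f(I,J) = f(\ddot I,\ddot J), \] where $\ddot I = [a,a+t]\cup[a+2t,a+3t]$ and $\ddot J=[b,b+t]\cup[b+2t,b+3t]$.
   Context: For sets $A,B\subset\mathbb{R}$, $f(A,B)=\{f(x,y):x\in A, y\in B\}$. *)

From Stdlib Require Import Reals.
Open Scope R_scope.

Definition image2 (f : R -> R -> R) (A B : R -> Prop) : R -> Prop :=
  fun z => exists x y, A x /\ B y /\ z = f x y.

Definition Icc (u v : R) : R -> Prop := fun x => u <= x <= v.

Definition ddot (a t : R) : R -> Prop :=
  fun x => Icc a (a + t) x \/ Icc (a + 2 * t) (a + 3 * t) x.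

Definition fx2y (x y : R) : R := x ^ 2 * y.

(** The map (x, y) |-> x^2 y is increasing in each variable on positive
    reals, so it sends a rectangle [x0, x1] x [y0, y1] onto the interval
    [x0^2 y0, x1^2 y1].  The four rectangles making up ddot I x ddot J thus
    have interval images, and for a, b >= 2/3 consecutive ones (ordered by
    left endpoint) overlap; their union is therefore the whole image of
    I x J. *)
From Stdlib Require Import Reals Lra Psatz.
Open Scope R_scope.

Lemma image2_mono (f : R -> R -> R) (A A' B B' : R -> Prop) (z : R) :
  (forall x, A x -> A' x) -> (forall y, B y -> B' y) ->
  image2 f A B z -> image2 f A' B' z.
Proof.
  intros HA HB (x & y & Hx & Hy & ->).
  exists x, y; auto.
Qed.

Lemma Icc_split (l m m' u z : R) :
  m' <= m -> Icc l u z -> Icc l m z \/ Icc m' u z.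
Proof.
  unfold Icc; intros Hm Hz.
  destruct (Rle_dec z m); [left | right]; lra.
Qed.

Lemma Icc_sqr_surj (x0 x1 c : R) :
  0 <= x0 <= x1 -> Icc (x0 ^ 2) (x1 ^ 2) c ->
  exists x, Icc x0 x1 x /\ x ^ 2 = c.
Proof.
  unfold Icc; intros Hx0 Hc.
  exists (sqrt c); split; [split | apply pow2_sqrt; nra].
  - rewrite <- (sqrt_pow2 x0) by lra; apply sqrt_le_1_alt; lra.
  - rewrite <- (sqrt_pow2 x1) by lra; apply sqrt_le_1_alt; lra.
Qed.

Lemma image2_fx2y_Icc (x0 x1 y0 y1 z : R) :
  0 < x0 <= x1 -> 0 < y0 <= y1 ->
  image2 fx2y (Icc x0 x1) (Icc y0 y1) z <->
  Icc (fx2y x0 y0) (fx2y x1 y1) z.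
Proof.
  unfold image2, Icc, fx2y; intros Hx Hy; split.
  - intros (x & y & Hx' & Hy' & ->).
    assert (x0 ^ 2 <= x ^ 2 <= x1 ^ 2) by (split; nra).
    split; nra.
  - intros Hz.
    destruct (Icc_split _ (x1 ^ 2 * y0) (x1 ^ 2 * y0) _ _ (Rle_refl _) Hz)
      as [[Hlo Hhi] | [Hlo Hhi]].
    + assert (Hz_div : z = z / y0 * y0) by (field; lra).
      destruct (Icc_sqr_surj x0 x1 (z / y0)) as (x & Hx' & Hxz);
        [lra | split; apply (Rmult_le_reg_r y0); lra |].
      exists x, y0; split; [exact Hx' | split; [lra |]].
      rewrite Hxz; exact Hz_div.
    + assert (Hx1 : 0 < x1 ^ 2) by nra.
      assert (Hz_div : z = x1 ^ 2 * (z / x1 ^ 2)) by (field; lra).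
      exists x1, (z / x1 ^ 2); split; [lra | split; [| exact Hz_div]].
      split; apply (Rmult_le_reg_l (x1 ^ 2)); lra.
Qed.

Lemma image2_fx2y_sub (A B : R -> Prop) (x0 x1 y0 y1 z : R) :
  0 < x0 <= x1 -> 0 < y0 <= y1 ->
  (forall x, Icc x0 x1 x -> A x) -> (forall y, Icc y0 y1 y -> B y) ->
  Icc (fx2y x0 y0) (fx2y x1 y1) z -> image2 fx2y A B z.
Proof.
  intros Hx Hy HA HB Hz.
  apply (image2_mono _ _ _ _ _ _ HA HB), image2_fx2y_Icc; assumption.
Qed.

(* The middle overlap is where a >= 2/3 is
   needed: 3 (a + t)^2 >= b (2 a + 3 t) follows from 3 a^2 >= 2 a and b <= 1. *)
Lemma fx2y_ddot_overlaps (a b t : R) :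
  0 < t -> 2 / 3 <= a -> a + 3 * t <= 1 -> 2 / 3 <= b -> b + 3 * t <= 1 ->
  fx2y a (b + 2 * t) <= fx2y (a + t) (b + t) /\
  fx2y (a + 2 * t) b <= fx2y (a + t) (b + 3 * t) /\
  fx2y (a + 2 * t) (b + 2 * t) <= fx2y (a + 3 * t) (b + t).
Proof.
  unfold fx2y; intros Ht Ha Ha' Hb Hb'; split; [| split].
  - assert (E : (a + t) ^ 2 * (b + t) - a ^ 2 * (b + 2 * t)
                = t * a * (2 * b - a) + t ^ 2 * (2 * a + b + t)) by ring.
    assert (0 <= t * a * (2 * b - a)) by (apply Rmult_le_pos; nra).
    nra.
  - assert (E : (a + t) ^ 2 * (b + 3 * t) - (a + 2 * t) ^ 2 * b
                = t * (3 * (a + t) ^ 2 - b * (2 * a + 3 * t))) by ring.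
    assert (0 <= t * (3 * (a + t) ^ 2 - b * (2 * a + 3 * t)))
      by (apply Rmult_le_pos; nra).
    nra.
  - assert (E : (a + 3 * t) ^ 2 * (b + t) - (a + 2 * t) ^ 2 * (b + 2 * t)
                = t * (a * (2 * b - a) + t * (5 * b - 2 * a) + t * t)) by ring.
    assert (0 <= t * (a * (2 * b - a) + t * (5 * b - 2 * a) + t * t))
      by (apply Rmult_le_pos; nra).
    nra.
Qed.

Theorem lemma3p4 (a b t : R) :
  0 < t ->
  2 / 3 <= a -> a + 3 * t <= 1 ->
  2 / 3 <= b -> b + 3 * t <= 1 ->
  forall z : R,
    image2 fx2y (Icc a (a + 3 * t)) (Icc b (b + 3 * t)) z <->
    image2 fx2y (ddot a t) (ddot b t) z.
Proof.
  intros Ht Ha Ha' Hb Hb' z; split.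
  - intros Hz; apply image2_fx2y_Icc in Hz; [| lra | lra].
    destruct (fx2y_ddot_overlaps a b t) as (O1 & O2 & O3); try assumption.
    destruct (Icc_split _ _ _ _ _ O1 Hz) as [Hz00 | Hz'].
    { apply (image2_fx2y_sub _ _ a (a + t) b (b + t));
        unfold ddot; auto; lra. }
    destruct (Icc_split _ _ _ _ _ O2 Hz') as [Hz01 | Hz''].
    { apply (image2_fx2y_sub _ _ a (a + t) (b + 2 * t) (b + 3 * t));
        unfold ddot; auto; lra. }
    destruct (Icc_split _ _ _ _ _ O3 Hz'') as [Hz10 | Hz11].
    + apply (image2_fx2y_sub _ _ (a + 2 * t) (a + 3 * t) b (b + t));
        unfold ddot; auto; lra.
    + apply (image2_fx2y_sub _ _ (a + 2 * t) (a + 3 * t) (b + 2 * t) (b + 3 * t));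
        unfold ddot; auto; lra.
  - apply image2_mono; unfold ddot, Icc; intros; lra.
Qed.
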